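(* Let $k$ be a positive integer and let $m>k$ be an integer. If $v$ and $w$ are vertices lying in distinct connected components of $\mathcal F_k^{(m)}$, then they lie in distinct connected components of $\mathcal F_k^{(m+1)}$.
   Context: The vertex set $V$ consists of all reduced fractions $p/q$ with $p,q\in\mathbb Z$, $\gcd(p,q)=1$, together with $1/0$; here $p/q$ and $(-p)/(-q)$ denote the same vertex. For vertices define $d(p/q,a/b)=|pb-qa|$. The graph $\mathcal F_k$ has vertex set $V$, with an edge between $p/q$ and $a/b$ exactly when $d(p/q,a/b)=k$. The level of a vertex $p/q$ is $\max\{|p|,|q|\}$. For $m\in\mathbb N$, $\mathcal F_k^{(m)}$ is the subgraph of $\mathcal F_k$ induced on the vertices of level at most $m$. *)

From Stdlib Require Import ZArith Relations.
Open Scope Z_scope.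

(* A vertex p/q is represented by a pair (p,q) of integers with gcd(p,q)=1
   (this includes 1/0 = (1,0) and excludes (0,0)). The pairs (p,q) and
   (-p,-q) denote the same vertex. *)
Definition is_vertex (v : Z * Z) : Prop := Z.gcd (fst v) (snd v) = 1.

Definition vneg (v : Z * Z) : Z * Z := (- fst v, - snd v).

Definition dist (v w : Z * Z) : Z :=
  Z.abs (fst v * snd w - snd v * fst w).

Definition level (v : Z * Z) : Z := Z.max (Z.abs (fst v)) (Z.abs (snd v)).

(* One step in F_k^(m), working with representatives: either an edge
   (d = k) or passing between two representatives of the same vertex. *)
Definition step (k m : Z) (v w : Z * Z) : Prop :=
  is_vertex v /\ is_vertex w /\ level v <= m /\ level w <= m /\
  (dist v w = k \/ w = vneg v).

Definition connected (k m : Z) (v w : Z * Z) : Prop :=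
  clos_refl_trans (Z * Z) (step k m) v w.

From Stdlib Require Import ZArith Relations Lia.
Open Scope Z_scope.

(* A path in F_k^(m+1) between vertices of level at most m can only leave
   level m through vertices u of level m+1, and it must leave such a u
   through another neighbour, since two vertices of level m+1 are never at
   distance k < m+1.  Any two neighbours y, y' of u of level at most m are
   already joined in F_k^(m): after fixing signs, det(u,y) = det(u,y') = k,
   so y - y' is an integer multiple t u (u is primitive), and the level
   bound forces t in {-1,0,1}; for t = +-1 the vertices y and y' are
   adjacent.  Hence every detour through level m+1 can be short-cut. *)

Definition det (v w : Z * Z) : Z := fst v * snd w - snd v * fst w.

Lemma dist_det v w : dist v w = Z.abs (det v w).
Proof. reflexivity. Qed.

Lemma det_vneg_r u y : det u (vneg y) = - det u y.
Proof. destruct u, y; unfold det, vneg; simpl; ring. Qed.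

Lemma dist_sym v w : dist v w = dist w v.
Proof. destruct v, w; unfold dist; simpl. rewrite <- Z.abs_opp. f_equal; ring. Qed.

Lemma dist_vneg_l v w : dist (vneg v) w = dist v w.
Proof. destruct v, w; unfold dist, vneg; simpl. rewrite <- Z.abs_opp. f_equal; ring. Qed.

Lemma vneg_involutive v : vneg (vneg v) = v.
Proof. destruct v; unfold vneg; simpl. rewrite !Z.opp_involutive. reflexivity. Qed.

Lemma is_vertex_vneg v : is_vertex v -> is_vertex (vneg v).
Proof. destruct v; unfold is_vertex, vneg; simpl. rewrite Z.gcd_opp_l, Z.gcd_opp_r. auto. Qed.

Lemma level_vneg v : level (vneg v) = level v.
Proof. destruct v; unfold level, vneg; simpl. rewrite !Z.abs_opp. reflexivity. Qed.

Lemma step_sym k m v w : step k m v w -> step k m w v.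
Proof.
  intros (Hv & Hw & Hlv & Hlw & [Hd | ->]); repeat split; auto.
  - left. rewrite dist_sym. exact Hd.
  - right. symmetry. apply vneg_involutive.
Qed.

Lemma connected_sym k m v w : connected k m v w -> connected k m w v.
Proof.
  induction 1 as [v w Hs | v | u v w _ IHuv _ IHvw].
  - apply rt_step, step_sym, Hs.
  - apply rt_refl.
  - eapply rt_trans; eassumption.
Qed.

Lemma connected_vneg k m y : is_vertex y -> level y <= m -> connected k m y (vneg y).
Proof.
  intros Hy Hly. apply rt_step.
  repeat split; auto using is_vertex_vneg; rewrite ?level_vneg; auto.
Qed.

Lemma connected_det_abs k m u y :
  is_vertex y -> level y <= m ->
  exists z, connected k m y z /\ is_vertex z /\ level z <= m /\ det u z = Z.abs (det u y).
Proof.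
  intros Hy Hly. destruct (Z.abs_spec (det u y)) as [[_ ->] | [_ ->]].
  - exists y. repeat split; auto. apply rt_refl.
  - exists (vneg y). rewrite level_vneg, det_vneg_r.
    repeat split; auto using connected_vneg, is_vertex_vneg.
Qed.

Lemma coprime_det0_multiple (a b c d : Z) :
  Z.gcd a b = 1 -> a * d = b * c -> exists t, c = t * a /\ d = t * b.
Proof.
  intros Hg Hdet. destruct (Z.gcd_bezout a b 1 Hg) as [p [q Hpq]].
  exists (p * c + q * d).
  split.
  - transitivity (c * (p * a + q * b) + q * (a * d - b * c)); [rewrite Hpq, Hdet; ring | ring].
  - transitivity (d * (p * a + q * b) - p * (a * d - b * c)); [rewrite Hpq, Hdet; ring | ring].
Qed.

Lemma det_eq_cases (u z z' : Z * Z) :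
  is_vertex u -> level z < level u -> level z' < level u -> det u z = det u z' ->
  z = z' \/ dist z z' = Z.abs (det u z).
Proof.
  destruct u as [a b], z as [x y], z' as [x' y'].
  unfold is_vertex, level, det, dist; simpl. intros Hu Hz Hz' Hdet.
  destruct (coprime_det0_multiple a b (x - x') (y - y') Hu) as [t [Ex Ey]]; [lia|].
  assert (Ht : t = -1 \/ t = 0 \/ t = 1).
  { assert (Z.abs (x - x') = Z.abs t * Z.abs a) by (rewrite Ex; apply Z.abs_mul).
    assert (Z.abs (y - y') = Z.abs t * Z.abs b) by (rewrite Ey; apply Z.abs_mul).
    assert (Z.abs t <= 1); [|lia].
    apply Z.nlt_ge. intros Ht.
    assert (2 * Z.abs a <= Z.abs t * Z.abs a) by (apply Z.mul_le_mono_nonneg_r; lia).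
    assert (2 * Z.abs b <= Z.abs t * Z.abs b) by (apply Z.mul_le_mono_nonneg_r; lia).
    lia. }
  destruct Ht as [-> | [-> | ->]].
  - right. rewrite Hdet. replace x with (x' - a) by lia. replace y with (y' - b) by lia.
    rewrite <- Z.abs_opp. f_equal. ring.
  - left. f_equal; lia.
  - right. rewrite Hdet. replace x with (x' + a) by lia. replace y with (y' + b) by lia.
    f_equal. ring.
Qed.

Lemma common_neighbours_connected k m u y y' :
  is_vertex u -> m < level u ->
  is_vertex y -> is_vertex y' -> level y <= m -> level y' <= m ->
  dist u y = k -> dist u y' = k -> connected k m y y'.
Proof.
  intros Hu Hlu Hy Hy' Hly Hly' Hd Hd'. rewrite dist_det in Hd, Hd'.
  destruct (connected_det_abs k m u y Hy Hly) as (z & Cz & Hz & Hlz & Ez).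
  destruct (connected_det_abs k m u y' Hy' Hly') as (z' & Cz' & Hz' & Hlz' & Ez').
  eapply rt_trans; [exact Cz|]. eapply rt_trans; [|apply connected_sym; exact Cz'].
  destruct (det_eq_cases u z z' Hu) as [<- | Hzz']; try lia.
  - apply rt_refl.
  - apply rt_step. repeat split; auto. left. lia.
Qed.

Lemma level_attained (u : Z * Z) :
  is_vertex u -> 1 < level u ->
  (Z.abs (fst u) = level u /\ Z.abs (snd u) < level u) \/
  (Z.abs (snd u) = level u /\ Z.abs (fst u) < level u).
Proof.
  destruct u as [a b]; unfold is_vertex, level; simpl. intros Hg Hl.
  assert (~ (Z.abs a = Z.abs b)).
  { intros Hab. rewrite <- Z.gcd_abs_l, <- Z.gcd_abs_r, Hab, Z.gcd_diag, Z.abs_idemp in Hg.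
    lia. }
  lia.
Qed.

Lemma dist_multiple (n : Z) (u u' : Z * Z) :
  0 < n -> (n | det u u') -> dist u u' = 0 \/ n <= dist u u'.
Proof.
  intros Hn Hdiv. rewrite dist_det.
  destruct (Z.eq_dec (det u u') 0) as [-> | Hnz]; [left; reflexivity|].
  right. apply Z.divide_pos_le; [lia|]. apply Z.divide_abs_r, Hdiv.
Qed.

Lemma divide_abs_self (a : Z) : (Z.abs a | a).
Proof. apply Z.divide_abs_l, Z.divide_refl. Qed.

Lemma dist_same_level (n : Z) (u u' : Z * Z) :
  is_vertex u -> is_vertex u' -> 1 < n -> level u = n -> level u' = n ->
  dist u u' = 0 \/ n <= dist u u'.
Proof.
  intros Hu Hu' Hn Hl Hl'.
  destruct (level_attained u Hu) as [[Ha Hb] | [Hb Ha]];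
  destruct (level_attained u' Hu') as [[Hc Hd] | [Hd Hc]]; try lia;
  rewrite Hl in Ha, Hb; rewrite Hl' in Hc, Hd;
  destruct u as [a b], u' as [c d]; simpl in *.
  - apply (dist_multiple n); [lia|]. unfold det; simpl.
    apply Z.divide_sub_r;
      [apply Z.divide_mul_l; rewrite <- Ha | apply Z.divide_mul_r; rewrite <- Hc];
      apply divide_abs_self.
  - right. unfold dist; simpl.
    assert (Z.abs (a * d) = n * n) by (rewrite Z.abs_mul; lia).
    assert (Z.abs (b * c) <= (n - 1) * (n - 1)) by (rewrite Z.abs_mul; nia).
    lia.
  - right. unfold dist; simpl.
    assert (Z.abs (b * c) = n * n) by (rewrite Z.abs_mul; lia).
    assert (Z.abs (a * d) <= (n - 1) * (n - 1)) by (rewrite Z.abs_mul; nia).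
    lia.
  - apply (dist_multiple n); [lia|]. unfold det; simpl.
    apply Z.divide_sub_r;
      [apply Z.divide_mul_r; rewrite <- Hd | apply Z.divide_mul_l; rewrite <- Hb];
      apply divide_abs_self.
Qed.

Section ShortcutLevel.

Variables (k m : Z) (v : Z * Z).
Hypotheses (Hk : 0 < k) (Hkm : k < m).

Definition attached (x : Z * Z) : Prop :=
  (level x <= m /\ connected k m v x) \/
  (m < level x /\
   exists y, is_vertex y /\ level y <= m /\ dist x y = k /\ connected k m v y).

Lemma attached_step x x' : attached x -> step k (m + 1) x x' -> attached x'.
Proof.
  intros Hx (Vx & Vx' & Lx & Lx' & E).
  destruct Hx as [[Hl C] | [Hl (y & Vy & Ly & Dy & Cy)]].
  - destruct (Z_le_gt_dec (level x') m) as [Hl' | Hl'].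
    + left. split; [exact Hl'|]. eapply rt_trans; [exact C|].
      apply rt_step. repeat split; auto.
    + right. split; [lia|]. exists x. repeat split; auto.
      destruct E as [E | ->]; [rewrite dist_sym; exact E|].
      rewrite level_vneg in Hl'. lia.
  - destruct E as [E | ->].
    + destruct (Z_le_gt_dec (level x') m) as [Hl' | Hl'].
      * left. split; [exact Hl'|]. eapply rt_trans; [exact Cy|].
        apply (common_neighbours_connected k m x); auto.
      * exfalso. destruct (dist_same_level (m + 1) x x'); auto; lia.
    + right. rewrite level_vneg. split; [exact Hl|].
      exists y. rewrite dist_vneg_l. auto.
Qed.

Lemma connected_succ_attached x :
  level v <= m -> connected k (m + 1) v x -> attached x.
Proof.
  intros Hlv Hc. apply clos_rt_rtn1 in Hc.
  induction Hc as [| x x' Hs _ IH].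
  - left. split; [exact Hlv | apply rt_refl].
  - exact (attached_step x x' IH Hs).
Qed.

End ShortcutLevel.

Theorem proposition4p8 (k m : Z) (v w : Z * Z) :
  0 < k -> k < m ->
  is_vertex v -> is_vertex w -> level v <= m -> level w <= m ->
  ~ connected k m v w -> ~ connected k (m + 1) v w.
Proof.
  intros Hk Hkm _ _ Hlv Hlw Hn Hc. apply Hn.
  destruct (connected_succ_attached k m v Hk Hkm w Hlv Hc) as [[_ C] | [Hw _]].
  - exact C.
  - lia.
Qed.
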